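(* Let $s\in\{0,\pm1,\pm2\}$ and let $\psi_s$ be a smooth spin-weight-$s$ solution of the Teukolsky master equation on the Kerr exterior $r>r_+$. Set $\Psi_s=\sqrt{r^2+a^2}\,\psi_s$ and $\Phi^{(0)}_s=\mu^{-s}\Psi_s$. Then $$\widehat\Box_s\Phi_s^{(0)}=\frac{2s(r^3-3Mr^2+a^2r+a^2M)}{(r^2+a^2)^2}\hat{\mathcal V}\Phi_s^{(0)}-\frac{2(2s+1)ar}{r^2+a^2}\mathcal{L}_\eta\Phi_s^{(0)}-\Big(2s-\frac{(2s+1)\big(2(s+1)Mr^3+a^2r^2-2(s+2)a^2Mr+a^4\big)}{(r^2+a^2)^2}\Big)\Phi_s^{(0)}.$$
   Context: Fix $M>0$, $|a|<M$; Boyer–Lindquist coordinates $(t,r,\theta,\phi)$, $\Delta=r^2-2Mr+a^2$, $r_+=M+\sqrt{M^2-a^2}$, $\mu=\Delta/(r^2+a^2)$. Vector fields: $Y=\frac{(r^2+a^2)\partial_t+a\partial_\phi}{\Delta}-\partial_r$, $V=\frac{(r^2+a^2)\partial_t+a\partial_\phi}{r^2+a^2}+\mu\partial_r$, $\hat V=\mu^{-1}V$, $\hat{\mathcal V}=(r^2+a^2)\hat V$, $\mathcal{L}_\xi=\partial_t$, $\mathcal{L}_\eta=\partial_\phi$. For a complex function $\varphi$ of spin weight $s$: $\mathring{\eth}\varphi=\partial_\theta\varphi+i\csc\theta\partial_\phi\varphi-s\cot\theta\varphi$, $\mathring{\eth}'\varphi=\partial_\theta\varphi-i\csc\theta\partial_\phi\varphi+s\cot\theta\varphi$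 (here $\mathring{\eth}'$ acts with weight $s$ and $\mathring{\eth}$ with weight $s-1$ in $\mathring{\eth}\mathring{\eth}'$). Spin-weighted wave operator $\widehat\Box_s=-(r^2+a^2)YV+\mathring{\eth}\mathring{\eth}'+2a\mathcal{L}_\xi\mathcal{L}_\eta+a^2\sin^2\theta\mathcal{L}_\xi^2-2ias\cos\theta\mathcal{L}_\xi$. Teukolsky master equation, with $\Sigma=r^2+a^2\cos^2\theta$: $0=-\frac{(r^2+a^2)^2-a^2\sin^2\theta\Delta}{\Delta}\partial_t^2\psi_s+\partial_r(\Delta\partial_r\psi_s)-\frac{4aMr}{\Delta}\partial_t\partial_\phi\psi_s-\frac{a^2}{\Delta}\partial_\phi^2\psi_s+\mathring{\eth}\mathring{\eth}'\psi_s-2ias\cos\theta\partial_t\psi_s+2s[(r-M)Y-2r\partial_t]\psi_s$. *)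

From Stdlib Require Import Reals ZArith List.
From Coquelicot Require Import Coquelicot.
Open Scope R_scope.

Definition Delta (M a r : R) : R := r ^ 2 - 2 * M * r + a ^ 2.
Definition rplus (M a : R) : R := M + sqrt (M ^ 2 - a ^ 2).
Definition mu (M a r : R) : R := Delta M a r / (r ^ 2 + a ^ 2).

(** Complex-valued functions of Boyer-Lindquist coordinates (t, r, theta, phi). *)
Definition F4 := R -> R -> R -> R -> C.

Definition sc (x : R) (z : C) : C := Cmult (RtoC x) z.
Definition Ci : C := (0, 1).

Definition CD (g : R -> C) (x : R) : C :=
  (Derive (fun y => fst (g y)) x, Derive (fun y => snd (g y)) x).

Definition dt  (f : F4) : F4 := fun t r th ph => CD (fun x => f x r th ph) t.
Definition dr  (f : F4) : F4 := fun t r th ph => CD (fun x => f t x th ph) r.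
Definition dth (f : F4) : F4 := fun t r th ph => CD (fun x => f t r x ph) th.
Definition dph (f : F4) : F4 := fun t r th ph => CD (fun x => f t r th x) ph.

Definition exterior (M a r th : R) : Prop := rplus M a < r /\ 0 < th < PI.

Definition pdk (k : nat) (f : F4) : F4 :=
  match k with 0 => dt f | 1 => dr f | 2 => dth f | _ => dph f end.
Definition iter_pd (l : list nat) (f : F4) : F4 := fold_right pdk f l.

Definition ex_pd (k : nat) (g : R -> R -> R -> R -> R) (t r th ph : R) : Prop :=
  match k with
  | 0 => ex_derive (fun x => g x r th ph) t
  | 1 => ex_derive (fun x => g t x th ph) r
  | 2 => ex_derive (fun x => g t r x ph) th
  | _ => ex_derive (fun x => g t r th x) ph
  end.

Definition cont4 (g : R -> R -> R -> R -> R) (t r th ph : R) : Prop :=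
  continuous (fun q : R * R * R * R =>
                g (fst (fst (fst q))) (snd (fst (fst q))) (snd (fst q)) (snd q))
             (t, r, th, ph).

Definition smooth_ext (M a : R) (f : F4) : Prop :=
  forall (l : list nat) (t r th ph : R), exterior M a r th ->
    let g := iter_pd l f in
    cont4 (fun t r th ph => fst (g t r th ph)) t r th ph /\
    cont4 (fun t r th ph => snd (g t r th ph)) t r th ph /\
    forall k : nat, (k < 4)%nat ->
      ex_pd k (fun t r th ph => fst (g t r th ph)) t r th ph /\
      ex_pd k (fun t r th ph => snd (g t r th ph)) t r th ph.

Definition Yop (M a : R) (f : F4) : F4 := fun t r th ph =>
  Cminus (sc (/ Delta M a r) (Cplus (sc (r ^ 2 + a ^ 2) (dt f t r th ph)) (sc a (dph f t r th ph))))
         (dr f t r th ph).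
Definition Vop (M a : R) (f : F4) : F4 := fun t r th ph =>
  Cplus (sc (/ (r ^ 2 + a ^ 2)) (Cplus (sc (r ^ 2 + a ^ 2) (dt f t r th ph)) (sc a (dph f t r th ph))))
        (sc (mu M a r) (dr f t r th ph)).
Definition Vhat (M a : R) (f : F4) : F4 := fun t r th ph =>
  sc (/ mu M a r) (Vop M a f t r th ph).
Definition calVhat (M a : R) (f : F4) : F4 := fun t r th ph =>
  sc (r ^ 2 + a ^ 2) (Vhat M a f t r th ph).

Definition eth (s : R) (f : F4) : F4 := fun t r th ph =>
  Cminus (Cplus (dth f t r th ph) (Cmult Ci (sc (/ sin th) (dph f t r th ph))))
         (sc (s * (cos th / sin th)) (f t r th ph)).
Definition eth' (s : R) (f : F4) : F4 := fun t r th ph =>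
  Cplus (Cminus (dth f t r th ph) (Cmult Ci (sc (/ sin th) (dph f t r th ph))))
        (sc (s * (cos th / sin th)) (f t r th ph)).
Definition ethethp (s : R) (f : F4) : F4 := eth (s - 1) (eth' s f).

Definition Box_s (M a s : R) (f : F4) : F4 := fun t r th ph =>
  Cminus
   (Cplus (Cplus (Cplus
     (Copp (sc (r ^ 2 + a ^ 2) (Yop M a (Vop M a f) t r th ph)))
     (ethethp s f t r th ph))
     (sc (2 * a) (dt (dph f) t r th ph)))
     (sc (a ^ 2 * sin th ^ 2) (dt (dt f) t r th ph)))
   (Cmult Ci (sc (2 * a * s * cos th) (dt f t r th ph))).

Definition teukolsky_at (M a s : R) (psi : F4) (t r th ph : R) : Prop :=
  let D := Delta M a r in
  Cplus (Cminus (Cplus (Cminus (Cminus (Cplus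
    (sc (- (((r ^ 2 + a ^ 2) ^ 2 - a ^ 2 * sin th ^ 2 * D) / D)) (dt (dt psi) t r th ph))
    (dr (fun t' r' th' ph' => sc (Delta M a r') (dr psi t' r' th' ph')) t r th ph))
    (sc (4 * a * M * r / D) (dt (dph psi) t r th ph)))
    (sc (a ^ 2 / D) (dph (dph psi) t r th ph)))
    (ethethp s psi t r th ph))
    (Cmult Ci (sc (2 * a * s * cos th) (dt psi t r th ph))))
    (sc (2 * s) (Cminus (sc (r - M) (Yop M a psi t r th ph)) (sc (2 * r) (dt psi t r th ph))))
  = RtoC 0.

Definition Phi0 (M a : R) (s : Z) (psi : F4) : F4 := fun t r th ph =>
  sc (powerRZ (mu M a r) (- s) * sqrt (r ^ 2 + a ^ 2)) (psi t r th ph).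

(* Write Phi0 = w psi with the radial weight w = mu^(-s) sqrt(L), L = r^2+a^2.
   Conjugating Box_s by a radial function c gives
     c^-1 Box_s (c psi) = Box_s psi + L (c'/c) V psi - L mu (c'/c) Y psi + L ((mu c')'/c) psi,
   and expanding Y V in coordinates shows that Box_s differs from the Teukolsky operator T_s
   only by first-order terms:
     Box_s = T_s - 2s ((r-M) Y - 2r d_t) - (2ar/L) d_phi - 2r mu d_r.
   For a solution psi the second-order terms therefore disappear, and since
   w'/w = -s Delta'/Delta + (2s+1) r/L, what is left is an identity between first-order
   expressions in psi with rational coefficients.  Mixed partials of the smooth psi commute
   by Schwarz's theorem. *)

From Stdlib Require Import Reals ZArith List Lia Lra FunctionalExtensionality.
From Coquelicot Require Import Coquelicot.
Open Scope R_scope.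

(** * Derivatives of complex-valued functions *)

Ltac C_components := cbv beta iota delta [Cminus Cplus Copp sc Cmult RtoC Ci fst snd]; f_equal.

Definition ex_CD (g : R -> C) (x : R) : Prop :=
  ex_derive (fun y => fst (g y)) x /\ ex_derive (fun y => snd (g y)) x.

Lemma CD_ext_loc (g1 g2 : R -> C) (x : R) :
  locally x (fun y => g1 y = g2 y) -> CD g1 x = CD g2 x.
Proof.
  intros H; unfold CD; f_equal; apply Derive_ext_loc;
    apply (filter_imp (fun y => g1 y = g2 y)); try (intros y ->; reflexivity); exact H.
Qed.

Lemma CD_ext (g1 g2 : R -> C) (x : R) : (forall y, g1 y = g2 y) -> CD g1 x = CD g2 x.
Proof. intros H; apply CD_ext_loc, filter_forall, H. Qed.

Lemma ex_CD_ext_loc (g1 g2 : R -> C) (x : R) :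
  locally x (fun y => g1 y = g2 y) -> ex_CD g1 x -> ex_CD g2 x.
Proof.
  intros H [H1 H2]; split;
    [apply (ex_derive_ext_loc (fun y => fst (g1 y))) | apply (ex_derive_ext_loc (fun y => snd (g1 y)))];
    try assumption; apply (filter_imp (fun y => g1 y = g2 y)); try (intros y ->; reflexivity); exact H.
Qed.

Lemma CD_plus (g1 g2 : R -> C) (x : R) : ex_CD g1 x -> ex_CD g2 x ->
  CD (fun y => Cplus (g1 y) (g2 y)) x = Cplus (CD g1 x) (CD g2 x).
Proof.
  intros [H1 H2] [H3 H4]; unfold CD, Cplus; cbn [fst snd].
  now rewrite (Derive_plus (fun y => fst (g1 y))), (Derive_plus (fun y => snd (g1 y))).
Qed.

Lemma CD_scal (k : R) (g : R -> C) (x : R) :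
  CD (fun y => sc k (g y)) x = sc k (CD g x).
Proof.
  unfold CD, sc, Cmult, RtoC; cbn [fst snd].
  rewrite (Derive_ext (fun y => k * fst (g y) - 0 * snd (g y)) (fun y => k * fst (g y))),
    (Derive_ext (fun y => k * snd (g y) + 0 * fst (g y)) (fun y => k * snd (g y))) by (intros; ring).
  rewrite !Derive_scal; f_equal; ring.
Qed.

Lemma CD_mult (k : R -> R) (dk : R) (g : R -> C) (x : R) :
  is_derive k x dk -> ex_CD g x ->
  CD (fun y => sc (k y) (g y)) x = Cplus (sc dk (g x)) (sc (k x) (CD g x)).
Proof.
  intros Hk [H1 H2]; unfold CD, sc, Cmult, Cplus, RtoC; cbn [fst snd].
  rewrite (Derive_ext (fun y => k y * fst (g y) - 0 * snd (g y)) (fun y => k y * fst (g y))),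
    (Derive_ext (fun y => k y * snd (g y) + 0 * fst (g y)) (fun y => k y * snd (g y)))
    by (intros; ring).
  assert (Hk' : ex_derive k x) by (eexists; exact Hk).
  rewrite !Derive_mult, (is_derive_unique _ _ _ Hk) by assumption.
  f_equal; ring.
Qed.

Lemma ex_CD_plus (g1 g2 : R -> C) (x : R) :
  ex_CD g1 x -> ex_CD g2 x -> ex_CD (fun y => Cplus (g1 y) (g2 y)) x.
Proof.
  intros [H1 H2] [H3 H4]; split; cbn [fst snd Cplus];
    [apply (ex_derive_plus (fun y => fst (g1 y))) | apply (ex_derive_plus (fun y => snd (g1 y)))];
    assumption.
Qed.

Lemma ex_CD_mult (k : R -> R) (g : R -> C) (x : R) :
  ex_derive k x -> ex_CD g x -> ex_CD (fun y => sc (k y) (g y)) x.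
Proof.
  intros Hk [H1 H2]; split; unfold sc, Cmult, RtoC; cbn [fst snd].
  - apply (ex_derive_minus (fun y => k y * fst (g y)));
      [apply (ex_derive_mult k) | apply ex_derive_scal]; assumption.
  - apply (ex_derive_plus (fun y => k y * snd (g y)));
      [apply (ex_derive_mult k) | apply ex_derive_scal]; assumption.
Qed.

Lemma ex_CD_scal (k : R) (g : R -> C) (x : R) : ex_CD g x -> ex_CD (fun y => sc k (g y)) x.
Proof. apply (ex_CD_mult (fun _ => k)), ex_derive_const. Qed.

Definition continuity_2d_pt_C (h : R -> R -> C) (x y : R) : Prop :=
  continuity_2d_pt (fun u v => fst (h u v)) x y /\ continuity_2d_pt (fun u v => snd (h u v)) x y.

Lemma CD_mixed_comm (g : R -> R -> C) (x y : R) :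
  locally_2d (fun u v =>
    ex_CD (fun z => g z v) u /\ ex_CD (fun z => g u z) v /\
    ex_CD (fun z => CD (fun w => g z w) v) u /\ ex_CD (fun z => CD (fun w => g w z) u) v) x y ->
  continuity_2d_pt_C (fun u v => CD (fun z => CD (fun w => g z w) v) u) x y ->
  continuity_2d_pt_C (fun u v => CD (fun z => CD (fun w => g w z) u) v) x y ->
  CD (fun z => CD (fun w => g z w) y) x = CD (fun z => CD (fun w => g w z) x) y.
Proof.
  intros Hd [Hc1 Hc2] [Hc3 Hc4]; unfold CD at 1 3; cbn [fst snd]; f_equal;
    [apply (Schwarz (fun u v => fst (g u v))) | apply (Schwarz (fun u v => snd (g u v)))];
    try assumption; revert Hd; apply locally_2d_impl, locally_2d_forall;
    intros u v ([? ?] & [? ?] & [? ?] & [? ?]); repeat split; assumption.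
Qed.

Lemma continuity_2d_pt_slice (G : R * R * R * R -> R) (e : R -> R -> R * R * R * R) (x y : R) :
  continuous G (e x y) ->
  (forall (d : posreal) u v, Rabs (u - x) < d -> Rabs (v - y) < d -> ball (e x y) d (e u v)) ->
  continuity_2d_pt (fun u v => G (e u v)) x y.
Proof.
  intros Hc He eps.
  destruct (proj1 (filterlim_locally _ _) Hc eps) as [d Hd].
  exists d; intros u v Hu Hv; exact (Hd _ (He d u v Hu Hv)).
Qed.

Lemma locally_2d_fst (P : R -> Prop) (x y : R) : locally x P -> locally_2d (fun u _ => P u) x y.
Proof. intros [d Hd]; exists d; intros u v Hu _; exact (Hd u Hu). Qed.

Lemma locally_2d_snd (P : R -> Prop) (x y : R) : locally y P -> locally_2d (fun _ v => P v) x y.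
Proof. intros [d Hd]; exists d; intros u v _ Hv; exact (Hd v Hv). Qed.

Lemma rplus_lt_Delta_pos (M a r : R) : Rabs a < M -> rplus M a < r -> 0 < r /\ 0 < Delta M a r.
Proof.
  intros ha hr; unfold rplus in hr; unfold Delta.
  destruct (Rabs_def2 a M ha).
  assert (hq := sqrt_sqrt (M ^ 2 - a ^ 2) ltac:(nra)).
  assert (hq0 := sqrt_pos (M ^ 2 - a ^ 2)).
  split; nra.
Qed.

Lemma exterior_r2_a2_neq0 (M a r th : R) : Rabs a < M -> exterior M a r th -> r ^ 2 + a ^ 2 <> 0.
Proof. intros ha He; destruct (rplus_lt_Delta_pos M a r ha (proj1 He)); nra. Qed.

Lemma exterior_locally_r (M a r th : R) : exterior M a r th ->
  locally r (fun y => exterior M a y th).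
Proof.
  intros [hr hth]; apply (filter_imp (fun y => rplus M a < y)).
  - intros y hy; split; assumption.
  - exact (open_gt _ _ hr).
Qed.

Lemma is_derive_Delta (M a r : R) : is_derive (Delta M a) r (2 * r - 2 * M).
Proof. unfold Delta; auto_derive; [exact I | ring]. Qed.

Lemma is_derive_mu (M a r : R) : r ^ 2 + a ^ 2 <> 0 ->
  is_derive (mu M a) r (2 * M * (r ^ 2 - a ^ 2) / (r ^ 2 + a ^ 2) ^ 2).
Proof. intros hL; unfold mu, Delta; auto_derive; [exact hL | field; exact hL]. Qed.

Lemma is_derive_a_div_r2_a2 (a r : R) : r ^ 2 + a ^ 2 <> 0 ->
  is_derive (fun y => a / (y ^ 2 + a ^ 2)) r (- 2 * a * r / (r ^ 2 + a ^ 2) ^ 2).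
Proof. intros hL; auto_derive; [exact hL | field; exact hL]. Qed.

Section Smooth.
Variables (M a : R) (f : F4).
Hypothesis hf : smooth_ext M a f.

Lemma smooth_ext_pdk (k : nat) : smooth_ext M a (pdk k f).
Proof.
  intros l t r th ph He.
  pose proof (hf (l ++ k :: nil) t r th ph He) as H; cbv zeta in *.
  unfold iter_pd in *; rewrite fold_right_app in H; exact H.
Qed.

Lemma smooth_ex_CD_t t r th ph : exterior M a r th -> ex_CD (fun x => f x r th ph) t.
Proof. intros He; exact (proj2 (proj2 (hf nil t r th ph He)) 0%nat ltac:(lia)). Qed.

Lemma smooth_ex_CD_r t r th ph : exterior M a r th -> ex_CD (fun x => f t x th ph) r.
Proof. intros He; exact (proj2 (proj2 (hf nil t r th ph He)) 1%nat ltac:(lia)). Qed.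

Lemma smooth_ex_CD_ph t r th ph : exterior M a r th -> ex_CD (fun x => f t r th x) ph.
Proof. intros He; exact (proj2 (proj2 (hf nil t r th ph He)) 3%nat ltac:(lia)). Qed.

Ltac ball_coords := intros d u v Hu Hv; repeat split; try apply ball_center; assumption.

Lemma smooth_continuity_t_r t r th ph : exterior M a r th ->
  continuity_2d_pt_C (fun u v => f u v th ph) t r.
Proof.
  intros He; destruct (hf nil t r th ph He) as (H1 & H2 & _); split;
    refine (continuity_2d_pt_slice _ (fun u v => (u, v, th, ph)) t r _ _);
    solve [exact H1 | exact H2 | ball_coords].
Qed.

Lemma smooth_continuity_t_ph t r th ph : exterior M a r th ->
  continuity_2d_pt_C (fun u v => f u r th v) t ph.
Proof.
  intros He; destruct (hf nil t r th ph He) as (H1 & H2 & _); split;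
    refine (continuity_2d_pt_slice _ (fun u v => (u, r, th, v)) t ph _ _);
    solve [exact H1 | exact H2 | ball_coords].
Qed.

Lemma smooth_continuity_r_ph t r th ph : exterior M a r th ->
  continuity_2d_pt_C (fun u v => f t u th v) r ph.
Proof.
  intros He; destruct (hf nil t r th ph He) as (H1 & H2 & _); split;
    refine (continuity_2d_pt_slice _ (fun u v => (t, u, th, v)) r ph _ _);
    solve [exact H1 | exact H2 | ball_coords].
Qed.

End Smooth.

Lemma smooth_ext_dt M a f : smooth_ext M a f -> smooth_ext M a (dt f).
Proof. intros hf; exact (smooth_ext_pdk M a f hf 0). Qed.
Lemma smooth_ext_dr M a f : smooth_ext M a f -> smooth_ext M a (dr f).
Proof. intros hf; exact (smooth_ext_pdk M a f hf 1). Qed.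
Lemma smooth_ext_dph M a f : smooth_ext M a f -> smooth_ext M a (dph f).
Proof. intros hf; exact (smooth_ext_pdk M a f hf 3). Qed.

Create HintDb ex_CD.
#[local] Hint Resolve ex_CD_plus ex_CD_scal ex_CD_mult
  smooth_ext_dt smooth_ext_dr smooth_ext_dph : ex_CD.
#[local] Hint Extern 2 (ex_CD (fun x => ?g x ?r ?th ?ph) _) =>
  eapply (smooth_ex_CD_t _ _ g) : ex_CD.
#[local] Hint Extern 2 (ex_CD (fun x => ?g ?t x ?th ?ph) _) =>
  eapply (smooth_ex_CD_r _ _ g) : ex_CD.
#[local] Hint Extern 2 (ex_CD (fun x => ?g ?t ?r ?th x) _) =>
  eapply (smooth_ex_CD_ph _ _ g) : ex_CD.
#[local] Hint Extern 2 (ex_CD (?g ?t ?r ?th) _) =>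
  eapply (smooth_ex_CD_ph _ _ g) : ex_CD.

Ltac solve_ex_CD := eauto 20 with ex_CD.

Section MixedPartials.
Variables (M a : R) (f : F4).
Hypothesis hf : smooth_ext M a f.

Let hft := smooth_ext_dt M a f hf.
Let hfr := smooth_ext_dr M a f hf.
Let hfph := smooth_ext_dph M a f hf.

Lemma dph_dt_comm t r th ph : exterior M a r th ->
  dph (dt f) t r th ph = dt (dph f) t r th ph.
Proof.
  intros He; symmetry; apply (CD_mixed_comm (fun u v => f u r th v)).
  - apply locally_2d_forall; intros u v.
    exact (conj (smooth_ex_CD_t M a f hf u r th v He) (conj (smooth_ex_CD_ph M a f hf u r th v He)
      (conj (smooth_ex_CD_t M a _ hfph u r th v He) (smooth_ex_CD_ph M a _ hft u r th v He)))).
  - exact (smooth_continuity_t_ph M a _ (smooth_ext_dt M a _ hfph) t r th ph He).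
  - exact (smooth_continuity_t_ph M a _ (smooth_ext_dph M a _ hft) t r th ph He).
Qed.

Lemma dr_dt_comm t r th ph : exterior M a r th ->
  dr (dt f) t r th ph = dt (dr f) t r th ph.
Proof.
  intros He; symmetry; apply (CD_mixed_comm (fun u v => f u v th ph)).
  - apply (locally_2d_impl (fun _ v => exterior M a v th)).
    2: exact (locally_2d_snd _ t r (exterior_locally_r M a r th He)).
    apply locally_2d_forall; intros u v He'.
    exact (conj (smooth_ex_CD_t M a f hf u v th ph He') (conj (smooth_ex_CD_r M a f hf u v th ph He')
      (conj (smooth_ex_CD_t M a _ hfr u v th ph He') (smooth_ex_CD_r M a _ hft u v th ph He')))).
  - exact (smooth_continuity_t_r M a _ (smooth_ext_dt M a _ hfr) t r th ph He).
  - exact (smooth_continuity_t_r M a _ (smooth_ext_dr M a _ hft) t r th ph He).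
Qed.

Lemma dr_dph_comm t r th ph : exterior M a r th ->
  dr (dph f) t r th ph = dph (dr f) t r th ph.
Proof.
  intros He; apply (CD_mixed_comm (fun u v => f t u th v)).
  - apply (locally_2d_impl (fun u _ => exterior M a u th)).
    2: exact (locally_2d_fst _ r ph (exterior_locally_r M a r th He)).
    apply locally_2d_forall; intros u v He'.
    exact (conj (smooth_ex_CD_r M a f hf t u th v He') (conj (smooth_ex_CD_ph M a f hf t u th v He')
      (conj (smooth_ex_CD_r M a _ hfph t u th v He') (smooth_ex_CD_ph M a _ hfr t u th v He')))).
  - exact (smooth_continuity_r_ph M a _ (smooth_ext_dr M a _ hfph) t r th ph He).
  - exact (smooth_continuity_r_ph M a _ (smooth_ext_dph M a _ hfr) t r th ph He).
Qed.

End MixedPartials.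

(** * The vector fields V and Y *)

Definition ex_CD_Yop (W : F4) (t r th ph : R) : Prop :=
  ex_CD (fun x => W x r th ph) t /\ ex_CD (fun x => W t x th ph) r /\ ex_CD (fun x => W t r th x) ph.

Lemma ex_CD_Yop_smooth M a f t r th ph :
  smooth_ext M a f -> exterior M a r th -> ex_CD_Yop f t r th ph.
Proof. intros hf He; refine (conj _ (conj _ _)); solve_ex_CD. Qed.

Lemma Vop_expand M a f t r th ph : r ^ 2 + a ^ 2 <> 0 ->
  Vop M a f t r th ph =
  Cplus (Cplus (dt f t r th ph) (sc (a / (r ^ 2 + a ^ 2)) (dph f t r th ph)))
        (sc (mu M a r) (dr f t r th ph)).
Proof. intros hL; unfold Vop; C_components; field; exact hL. Qed.

Section Commutators.
Variables (M a : R) (f : F4).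
Hypotheses (ha : Rabs a < M) (hf : smooth_ext M a f).

Lemma Vop_expand_locally t r th ph : exterior M a r th ->
  locally r (fun y => Vop M a f t y th ph =
    Cplus (Cplus (dt f t y th ph) (sc (a / (y ^ 2 + a ^ 2)) (dph f t y th ph)))
          (sc (mu M a y) (dr f t y th ph))).
Proof.
  intros He; apply (filter_imp (fun y => exterior M a y th)), exterior_locally_r, He.
  intros y Hy; apply Vop_expand, (exterior_r2_a2_neq0 M a y th ha Hy).
Qed.

Lemma dt_Vop t r th ph : exterior M a r th ->
  dt (Vop M a f) t r th ph = Vop M a (dt f) t r th ph.
Proof.
  intros He; pose proof (exterior_r2_a2_neq0 M a r th ha He) as hL.
  unfold dt at 1; erewrite CD_ext by (intros x; apply Vop_expand, hL).
  rewrite Vop_expand, (dph_dt_comm M a), (dr_dt_comm M a) by assumption.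
  rewrite !CD_plus, !CD_scal by solve_ex_CD.
  reflexivity.
Qed.

Lemma dph_Vop t r th ph : exterior M a r th ->
  dph (Vop M a f) t r th ph = Vop M a (dph f) t r th ph.
Proof.
  intros He; pose proof (exterior_r2_a2_neq0 M a r th ha He) as hL.
  unfold dph at 1; erewrite CD_ext by (intros x; apply Vop_expand, hL).
  rewrite Vop_expand, <- (dph_dt_comm M a), (dr_dph_comm M a) by assumption.
  rewrite !CD_plus, !CD_scal by solve_ex_CD.
  reflexivity.
Qed.

Lemma dr_Vop t r th ph : exterior M a r th ->
  dr (Vop M a f) t r th ph =
  Cplus (Vop M a (dr f) t r th ph)
    (Cplus (sc (- 2 * a * r / (r ^ 2 + a ^ 2) ^ 2) (dph f t r th ph))
           (sc (2 * M * (r ^ 2 - a ^ 2) / (r ^ 2 + a ^ 2) ^ 2) (dr f t r th ph))).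
Proof.
  intros He; pose proof (exterior_r2_a2_neq0 M a r th ha He) as hL.
  assert (ex_derive (fun y => a / (y ^ 2 + a ^ 2)) r)
    by (eexists; apply is_derive_a_div_r2_a2, hL).
  assert (ex_derive (mu M a) r) by (eexists; apply is_derive_mu, hL).
  unfold dr at 1; erewrite CD_ext_loc by exact (Vop_expand_locally t r th ph He).
  rewrite !CD_plus by solve_ex_CD.
  rewrite (CD_mult _ _ _ _ (is_derive_a_div_r2_a2 a r hL)),
    (CD_mult _ _ _ _ (is_derive_mu M a r hL)) by solve_ex_CD.
  rewrite Vop_expand by exact hL.
  change (CD (fun y => dt f t y th ph) r) with (dr (dt f) t r th ph).
  change (CD (fun y => dph f t y th ph) r) with (dr (dph f) t r th ph).
  change (CD (fun y => dr f t y th ph) r) with (dr (dr f) t r th ph).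
  rewrite (dr_dt_comm M a), (dr_dph_comm M a) by assumption.
  C_components; field; exact hL.
Qed.

Lemma ex_CD_Yop_Vop t r th ph : exterior M a r th -> ex_CD_Yop (Vop M a f) t r th ph.
Proof.
  intros He; pose proof (exterior_r2_a2_neq0 M a r th ha He) as hL.
  assert (ex_derive (fun y => a / (y ^ 2 + a ^ 2)) r)
    by (eexists; apply is_derive_a_div_r2_a2, hL).
  assert (ex_derive (mu M a) r) by (eexists; apply is_derive_mu, hL).
  refine (conj _ (conj _ _)).
  - eapply ex_CD_ext_loc; [apply filter_forall; intros x; symmetry; apply Vop_expand, hL |].
    solve_ex_CD.
  - eapply ex_CD_ext_loc;
      [apply (filter_imp _ _ (fun y E => eq_sym E)), Vop_expand_locally, He |].
    solve_ex_CD.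
  - eapply ex_CD_ext_loc; [apply filter_forall; intros x; symmetry; apply Vop_expand, hL |].
    solve_ex_CD.
Qed.

End Commutators.

(** * Box_s versus the Teukolsky operator *)

(* [teukolsky_at M a S psi t r th ph] is [teukolsky_op M a S psi t r th ph = 0] up to
   conversion. *)
Definition teukolsky_op (M a S : R) (psi : F4) : F4 := fun t r th ph =>
  Cplus (Cminus (Cplus (Cminus (Cminus (Cplus
    (sc (- (((r ^ 2 + a ^ 2) ^ 2 - a ^ 2 * sin th ^ 2 * Delta M a r) / Delta M a r))
        (dt (dt psi) t r th ph))
    (dr (fun t' r' th' ph' => sc (Delta M a r') (dr psi t' r' th' ph')) t r th ph))
    (sc (4 * a * M * r / Delta M a r) (dt (dph psi) t r th ph)))
    (sc (a ^ 2 / Delta M a r) (dph (dph psi) t r th ph)))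
    (ethethp S psi t r th ph))
    (Cmult Ci (sc (2 * a * S * cos th) (dt psi t r th ph))))
    (sc (2 * S) (Cminus (sc (r - M) (Yop M a psi t r th ph)) (sc (2 * r) (dt psi t r th ph)))).

Section BoxTeukolsky.
Variables (M a S : R) (f : F4).
Hypotheses (ha : Rabs a < M) (hf : smooth_ext M a f).

Lemma dr_Delta_dr t r th ph : exterior M a r th ->
  dr (fun t' r' th' ph' => sc (Delta M a r') (dr f t' r' th' ph')) t r th ph =
  Cplus (sc (2 * r - 2 * M) (dr f t r th ph)) (sc (Delta M a r) (dr (dr f) t r th ph)).
Proof.
  intros He.
  exact (CD_mult (Delta M a) _ (fun y => dr f t y th ph) r (is_derive_Delta M a r)
    ltac:(solve_ex_CD)).
Qed.

Lemma Box_s_teukolsky t r th ph : exterior M a r th ->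
  Box_s M a S f t r th ph =
  Cminus (Cminus (Cminus (teukolsky_op M a S f t r th ph)
    (sc (2 * S) (Cminus (sc (r - M) (Yop M a f t r th ph)) (sc (2 * r) (dt f t r th ph)))))
    (sc (2 * a * r / (r ^ 2 + a ^ 2)) (dph f t r th ph)))
    (sc (2 * r * mu M a r) (dr f t r th ph)).
Proof.
  intros He; pose proof (exterior_r2_a2_neq0 M a r th ha He) as hL.
  destruct (rplus_lt_Delta_pos M a r ha (proj1 He)) as [_ hD].
  unfold Box_s, teukolsky_op, Yop at 1.
  rewrite (dt_Vop M a), (dph_Vop M a), (dr_Vop M a), dr_Delta_dr by assumption.
  rewrite !Vop_expand by exact hL.
  rewrite (dph_dt_comm M a), (dr_dt_comm M a), (dr_dph_comm M a) by assumption.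
  unfold Yop, mu, Delta in *; C_components; field; lra.
Qed.

End BoxTeukolsky.

(** * Conjugation by radial functions *)

Definition radial_mul (c : R -> R) (f : F4) : F4 := fun t r th ph => sc (c r) (f t r th ph).

Ltac F4_ext := apply functional_extensionality; intros t;
  apply functional_extensionality; intros r; apply functional_extensionality; intros th;
  apply functional_extensionality; intros ph.

Lemma dt_radial_mul c f : dt (radial_mul c f) = radial_mul c (dt f).
Proof. F4_ext; apply CD_scal. Qed.

Lemma dth_radial_mul c f : dth (radial_mul c f) = radial_mul c (dth f).
Proof. F4_ext; apply CD_scal. Qed.

Lemma dph_radial_mul c f : dph (radial_mul c f) = radial_mul c (dph f).
Proof. F4_ext; apply CD_scal. Qed.

Lemma eth_radial_mul S c f : eth S (radial_mul c f) = radial_mul c (eth S f).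
Proof.
  unfold eth; rewrite dth_radial_mul, dph_radial_mul; F4_ext; unfold radial_mul;
    C_components; ring.
Qed.

Lemma eth'_radial_mul S c f : eth' S (radial_mul c f) = radial_mul c (eth' S f).
Proof.
  unfold eth'; rewrite dth_radial_mul, dph_radial_mul; F4_ext; unfold radial_mul;
    C_components; ring.
Qed.

Lemma ethethp_radial_mul S c f : ethethp S (radial_mul c f) = radial_mul c (ethethp S f).
Proof. unfold ethethp; rewrite eth'_radial_mul, eth_radial_mul; reflexivity. Qed.

Section RadialMultiplier.
Variables (M a : R) (c dc : R -> R) (f : F4).

Lemma dr_radial_mul t r th ph : is_derive c r (dc r) -> ex_CD (fun x => f t x th ph) r ->
  dr (radial_mul c f) t r th ph = Cplus (sc (dc r) (f t r th ph)) (sc (c r) (dr f t r th ph)).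
Proof. intros Hc Hf; exact (CD_mult c (dc r) (fun x => f t x th ph) r Hc Hf). Qed.

Lemma Vop_radial_mul t r th ph : is_derive c r (dc r) -> ex_CD (fun x => f t x th ph) r ->
  Vop M a (radial_mul c f) t r th ph =
  Cplus (radial_mul c (Vop M a f) t r th ph) (radial_mul (fun y => mu M a y * dc y) f t r th ph).
Proof.
  intros Hc Hf; unfold Vop; rewrite dt_radial_mul, dph_radial_mul, dr_radial_mul by assumption.
  unfold radial_mul; C_components; ring.
Qed.

Lemma Yop_radial_mul t r th ph : is_derive c r (dc r) -> ex_CD (fun x => f t x th ph) r ->
  Yop M a (radial_mul c f) t r th ph =
  Cminus (radial_mul c (Yop M a f) t r th ph) (sc (dc r) (f t r th ph)).
Proof.
  intros Hc Hf; unfold Yop; rewrite dt_radial_mul, dph_radial_mul, dr_radial_mul by assumption.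
  unfold radial_mul; C_components; ring.
Qed.

End RadialMultiplier.

Lemma ex_CD_Yop_radial_mul c W t r th ph :
  ex_derive c r -> ex_CD_Yop W t r th ph -> ex_CD_Yop (radial_mul c W) t r th ph.
Proof.
  intros Hc (H1 & H2 & H3); unfold radial_mul; refine (conj _ (conj _ _));
    [apply ex_CD_scal | apply ex_CD_mult | apply ex_CD_scal]; assumption.
Qed.

Lemma Yop_plus M a W1 W2 t r th ph :
  ex_CD_Yop W1 t r th ph -> ex_CD_Yop W2 t r th ph ->
  Yop M a (fun t r th ph => Cplus (W1 t r th ph) (W2 t r th ph)) t r th ph =
  Cplus (Yop M a W1 t r th ph) (Yop M a W2 t r th ph).
Proof.
  intros (H1 & H2 & H3) (H4 & H5 & H6); unfold Yop, dt, dr, dph.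
  rewrite (CD_plus (fun x => W1 x r th ph) (fun x => W2 x r th ph)),
    (CD_plus (fun x => W1 t x th ph) (fun x => W2 t x th ph)),
    (CD_plus (fun x => W1 t r th x) (fun x => W2 t r th x)) by assumption.
  C_components; ring.
Qed.

Lemma Yop_ext_exterior M a W1 W2 t r th ph :
  (forall t y th ph, exterior M a y th -> W1 t y th ph = W2 t y th ph) ->
  exterior M a r th -> Yop M a W1 t r th ph = Yop M a W2 t r th ph.
Proof.
  intros HW He; unfold Yop, dt, dr, dph.
  rewrite (CD_ext (fun x => W1 x r th ph) (fun x => W2 x r th ph)),
    (CD_ext (fun x => W1 t r th x) (fun x => W2 t r th x)),
    (CD_ext_loc (fun x => W1 t x th ph) (fun x => W2 t x th ph)).
  - reflexivity.
  - apply (filter_imp (fun y => exterior M a y th)), exterior_locally_r, He.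
    intros y Hy; apply HW, Hy.
  - intros x; apply HW, He.
  - intros x; apply HW, He.
Qed.

Section Conjugation.
Variables (M a S : R) (c dc : R -> R) (f : F4).
Hypotheses (ha : Rabs a < M) (hf : smooth_ext M a f)
  (hc : forall y, rplus M a < y -> is_derive c y (dc y)).

Lemma Box_s_radial_mul t r th ph ddc : exterior M a r th ->
  is_derive (fun y => mu M a y * dc y) r ddc ->
  Box_s M a S (radial_mul c f) t r th ph =
  Cplus (Cminus (Cplus (radial_mul c (Box_s M a S f) t r th ph)
      (sc ((r ^ 2 + a ^ 2) * dc r) (Vop M a f t r th ph)))
      (sc ((r ^ 2 + a ^ 2) * mu M a r * dc r) (Yop M a f t r th ph)))
    (sc ((r ^ 2 + a ^ 2) * ddc) (f t r th ph)).
Proof.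
  intros He Hddc.
  assert (Hc : is_derive c r (dc r)) by apply hc, He.
  pose proof (ex_CD_Yop_Vop M a f ha hf t r th ph He) as hV.
  unfold Box_s.
  rewrite (Yop_ext_exterior M a _
    (fun t y th ph => Cplus (radial_mul c (Vop M a f) t y th ph)
                            (radial_mul (fun y => mu M a y * dc y) f t y th ph))) by
    (try (intros t' y th' ph' Hy; apply Vop_radial_mul; [apply hc, Hy | solve_ex_CD]); exact He).
  rewrite (Yop_plus M a).
  2: { apply ex_CD_Yop_radial_mul; [eexists; exact Hc | exact hV]. }
  2: { apply ex_CD_Yop_radial_mul; [eexists; exact Hddc | apply (ex_CD_Yop_smooth M a); assumption]. }
  rewrite (Yop_radial_mul M a c dc), (Yop_radial_mul M a _ (fun _ => ddc))
    by first [assumption | exact (proj1 (proj2 hV)) | solve_ex_CD].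
  rewrite ethethp_radial_mul, dph_radial_mul, !dt_radial_mul.
  unfold radial_mul; C_components; ring.
Qed.

End Conjugation.

(** * The weight of Phi0 *)

Definition phi0_weight (M a : R) (s : Z) (r : R) : R :=
  powerRZ (mu M a r) (- s) * sqrt (r ^ 2 + a ^ 2).

Definition phi0_log_deriv (M a S r : R) : R :=
  - S * (2 * r - 2 * M) / Delta M a r + (2 * S + 1) * r / (r ^ 2 + a ^ 2).

Lemma is_derive_phi0_weight (M a : R) (s : Z) (r : R) : Rabs a < M -> rplus M a < r ->
  is_derive (phi0_weight M a s) r (phi0_weight M a s r * phi0_log_deriv M a (IZR s) r).
Proof.
  intros ha hr.
  (* mu > 0 on the exterior, where mu ^ (- s) = exp (- s ln mu) *)
  set (E := fun y => exp (IZR (- s) * ln (mu M a y)) * sqrt (y ^ 2 + a ^ 2)).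
  assert (HE : forall y, rplus M a < y -> phi0_weight M a s y = E y).
  { intros y hy; destruct (rplus_lt_Delta_pos M a y ha hy) as [hy0 hDy].
    unfold phi0_weight, E; rewrite powerRZ_Rpower; [reflexivity |].
    unfold mu; apply Rdiv_lt_0_compat; [exact hDy | nra]. }
  destruct (rplus_lt_Delta_pos M a r ha hr) as [hr0 hD].
  assert (hL : 0 < r ^ 2 + a ^ 2) by nra.
  apply (is_derive_ext_loc E).
  { apply (filter_imp (fun y => rplus M a < y)); [intros y hy; symmetry; apply HE, hy |].
    exact (open_gt _ _ hr). }
  rewrite HE by exact hr.
  unfold E, mu, phi0_log_deriv, Delta in *.
  auto_derive.
  - repeat split; try lra. apply Rdiv_lt_0_compat; lra.
  - assert (hq := sqrt_sqrt _ (Rlt_le _ _ hL)).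
    assert (hq0 := sqrt_lt_R0 _ hL).
    rewrite opp_IZR.
    replace (r * (r * 1) + - (2 * M * r) + a * (a * 1)) with (r ^ 2 - 2 * M * r + a ^ 2) by ring.
    replace (r * (r * 1) + a * (a * 1)) with (r ^ 2 + a ^ 2) by ring.
    unfold Rdiv; set (q := sqrt (r ^ 2 + a ^ 2)) in *.
    rewrite <- hq; field; lra.
Qed.

Lemma is_derive_mu_phi0_log_deriv (M a S r : R) : 0 < r -> 0 < Delta M a r ->
  is_derive (fun y => mu M a y * phi0_log_deriv M a S y) r
    (2 * M * (r ^ 2 - a ^ 2) / (r ^ 2 + a ^ 2) ^ 2 * phi0_log_deriv M a S r
     + mu M a r * (- S * (2 * Delta M a r - (2 * r - 2 * M) ^ 2) / Delta M a r ^ 2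
                   + (2 * S + 1) * (a ^ 2 - r ^ 2) / (r ^ 2 + a ^ 2) ^ 2)).
Proof.
  intros hr hD; assert (hL : 0 < r ^ 2 + a ^ 2) by nra.
  unfold mu, phi0_log_deriv, Delta in *.
  auto_derive; [repeat split; lra | field; lra].
Qed.

Theorem proposition3p11 (M a : R) (s : Z) (psi : F4)
  (hM : 0 < M) (ha : Rabs a < M)
  (hs : (-2 <= s <= 2)%Z)
  (hsmooth : smooth_ext M a psi)
  (hteuk : forall t r th ph, exterior M a r th -> teukolsky_at M a (IZR s) psi t r th ph) :
  forall t r th ph, exterior M a r th ->
    let S := IZR s in
    let P := Phi0 M a s psi in
    Box_s M a S P t r th ph =
    Cminus (Cminus
      (sc (2 * S * (r ^ 3 - 3 * M * r ^ 2 + a ^ 2 * r + a ^ 2 * M) / (r ^ 2 + a ^ 2) ^ 2)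
          (calVhat M a P t r th ph))
      (sc (2 * (2 * S + 1) * a * r / (r ^ 2 + a ^ 2)) (dph P t r th ph)))
      (sc (2 * S - (2 * S + 1) * (2 * (S + 1) * M * r ^ 3 + a ^ 2 * r ^ 2
                                  - 2 * (S + 2) * a ^ 2 * M * r + a ^ 4) / (r ^ 2 + a ^ 2) ^ 2)
          (P t r th ph)).
Proof.
  intros t r th ph He; cbv zeta.
  change (Phi0 M a s psi) with (radial_mul (phi0_weight M a s) psi).
  destruct (rplus_lt_Delta_pos M a r ha (proj1 He)) as [hr hD].
  pose proof (fun y hy => is_derive_phi0_weight M a s y ha hy) as hw.
  pose proof (is_derive_mult _ _ r _ _ (is_derive_mu_phi0_log_deriv M a (IZR s) r hr hD)
    (hw r (proj1 He)) Rmult_comm) as hddc.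
  set (w := phi0_weight M a s) in *; set (g := phi0_log_deriv M a (IZR s)) in *.
  apply (is_derive_ext _ (fun y => mu M a y * (w y * g y))) in hddc;
    [| intros y; unfold mult; simpl; ring].
  rewrite (Box_s_radial_mul M a (IZR s) w (fun y => w y * g y) psi ha hsmooth hw
    t r th ph _ He hddc).
  unfold calVhat, Vhat; rewrite (Vop_radial_mul M a w (fun y => w y * g y)), dph_radial_mul
    by first [apply hw, He | solve_ex_CD].
  unfold radial_mul.
  rewrite (Box_s_teukolsky M a (IZR s) psi ha hsmooth t r th ph He),
    (hteuk t r th ph He : teukolsky_op M a (IZR s) psi t r th ph = 0).
  rewrite Vop_expand by exact (exterior_r2_a2_neq0 M a r th ha He).
  unfold plus, mult; simpl.
  unfold Yop, g, mu, phi0_log_deriv, Delta in *.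
  C_components; field; split; nra.
Qed.
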